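(* Let $G$ be an undirected graph with vertex set $V$ and integer edge weights. Choose $V_1\subseteq V$ uniformly at random (each vertex independently with probability $1/2$) and let $\overline V=V\setminus V_1$. Let $G'$ have vertex set $V\cup V_2$, where $V_2=\{u_2:u\in V_1\}$ consists of new copies, and edges: all edges of $G$; for every edge $\{u,v\}$ of $G$ with $u,v\in V_1$ an edge $\{u_2,v_2\}$ of the same weight; and for every edge $\{u,v\}$ of $G$ with $u\in V_1,v\in\overline V$ an edge $\{u_2,v\}$ of the same weight. Let $N(G')$ denote the number of vertices of $G'$ lying on a negative-weight triangle. If $G$ has no negative-weight triangle then $N(G')$ is even with probability $1$; if $G$ has a negative-weight triangle then $N(G')$ is odd with probability exactly $1/2$.
   Context: A negative-weight triangle is a set of three pairwise adjacent vertices whose three edge weights sum to a negative number. *)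

From HB Require Import structures.
From mathcomp Require Import all_boot all_order all_algebra.
Set Implicit Arguments. Unset Strict Implicit. Unset Printing Implicit Defensive.
Import Order.TTheory GRing.Theory Num.Theory.
Local Open Scope ring_scope.

Definition neg_triangle (S : finType) (adj : rel S) (wt : S -> S -> int)
  (x y z : S) : bool :=
  [&& adj x y, adj y z, adj x z & wt x y + wt y z + wt x z < 0].

Definition has_neg_triangle (S : finType) (adj : rel S) (wt : S -> S -> int) : bool :=
  [exists x, exists y, exists z, neg_triangle adj wt x y z].

Definition on_neg_triangle (S : finType) (adj : rel S) (wt : S -> S -> int) (x : S) : bool :=
  [exists y, exists z, neg_triangle adj wt x y z].

(* The graph G' built from G = (T, e, w) and V1 : {set T}.
   Its vertices live in T + T: inl u is the original vertex u, inr u is the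
   copy u_2 (a vertex of G' only when u \in V1). *)
Definition ext_vert (T : finType) (V1 : {set T}) (x : T + T) : bool :=
  match x with inl _ => true | inr u => u \in V1 end.

Definition ext_edge (T : finType) (e : rel T) (V1 : {set T}) : rel (T + T) :=
  fun x y =>
  match x, y with
  | inl u, inl v => e u v
  | inr u, inr v => [&& u \in V1, v \in V1 & e u v]
  | inr u, inl v => [&& u \in V1, v \notin V1 & e u v]
  | inl u, inr v => [&& v \in V1, u \notin V1 & e u v]
  end.

Definition strip (T : Type) (x : T + T) : T :=
  match x with inl u => u | inr u => u end.

Definition ext_weight (T : finType) (w : T -> T -> int) (x y : T + T) : int :=
  w (strip x) (strip y).

Definition Nneg (T : finType) (e : rel T) (w : T -> T -> int) (V1 : {set T}) : nat :=
  #|[set x : T + T | ext_vert V1 x && on_neg_triangle (ext_edge e V1) (ext_weight w) x]|.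

(* Projecting G' onto G (u_2 |-> u) maps negative triangles to negative
   triangles, and conversely every negative triangle of G through u lifts to
   one of G' through u_2: send each vertex v to v_2 if v \in V1 and to v
   otherwise.  Hence, with W the set of vertices of G on a negative triangle,
   N(G') = |W| + |W ∩ V1|.  If W is empty this is 0; otherwise adding or
   removing a fixed w ∈ W to V1 is an involution on the choices of V1 that
   flips the parity of N(G'), so exactly half of the choices give odd parity. *)
From HB Require Import structures.
From mathcomp Require Import all_boot all_order all_algebra.
Import Order.TTheory GRing.Theory Num.Theory.

Set Implicit Arguments. Unset Strict Implicit.

Lemma inl_inj (T1 T2 : Type) : injective (@inl T1 T2). Proof. by move=> ? ? []. Qed.
Lemma inr_inj (T1 T2 : Type) : injective (@inr T1 T2). Proof. by move=> ? ? []. Qed.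

Lemma card_imset_inl_inr (T1 T2 : finType) (A : {set T1}) (B : {set T2}) :
  #|inl @: A :|: inr @: B| = (#|A| + #|B|)%N.
Proof.
rewrite cardsU (card_imset _ (@inl_inj _ _)) (card_imset _ (@inr_inj _ _)).
suff -> : inl @: A :&: inr @: B = set0 by rewrite cards0 subn0.
by apply/setP=> x; rewrite !inE; apply/andP=> -[/imsetP [a _ ->] /imsetP [b _]].
Qed.

Lemma card_swapped_by_involution (aT : finType) (f : aT -> aT) (P : {set aT}) :
  involutive f -> f @^-1: P = ~: P -> (2 * #|P|)%N = #|aT|.
Proof.
move=> fK fP; rewrite -(cardsC P) -fP (card_preimset _ (inv_inj fK)).
by rewrite mul2n addnn.
Qed.

Section ToggleParity.
Variable T : finType.

Definition toggle (a : T) (V : {set T}) : {set T} :=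
  if a \in V then V :\ a else a |: V.

Lemma toggleK a : involutive (toggle a).
Proof.
move=> V; rewrite /toggle; have [aV | naV] := boolP (a \in V).
  by rewrite !inE eqxx /= setD1K.
by rewrite setU11 setU1K.
Qed.

Lemma card_setI_setD1 (W V : {set T}) a : a \in W -> a \in V ->
  #|W :&: V| = #|W :&: (V :\ a)|.+1.
Proof. by move=> aW aV; rewrite (cardsD1 a) inE aW aV setIDA. Qed.

Lemma odd_card_setI_toggle (W V : {set T}) a : a \in W ->
  odd #|W :&: toggle a V| = ~~ odd #|W :&: V|.
Proof.
move=> aW; rewrite /toggle; have [aV | naV] := boolP (a \in V).
  by rewrite (card_setI_setD1 aW aV) /= negbK.
by rewrite (card_setI_setD1 aW (setU11 a V)) setU1K.
Qed.

Lemma card_odd_setI (W : {set T}) (c : nat) : W != set0 ->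
  (2 * #|[set V : {set T} | odd (c + #|W :&: V|)]|)%N = #|{set T}|.
Proof.
case/set0Pn=> a aW; apply: (card_swapped_by_involution (toggleK a)).
by apply/setP=> V; rewrite !inE !oddD odd_card_setI_toggle // addbN.
Qed.

End ToggleParity.

Definition neg_vertices (T : finType) (e : rel T) (w : T -> T -> int) : {set T} :=
  [set u | on_neg_triangle e w u].

Lemma neg_vertices_neq0 (T : finType) (e : rel T) (w : T -> T -> int) :
  (neg_vertices e w != set0) = has_neg_triangle e w.
Proof. by apply/set0Pn/existsP => -[u hu]; exists u; rewrite inE in hu *. Qed.

Section ExtendedGraph.
Variables (T : finType) (e : rel T) (w : T -> T -> int) (V1 : {set T}).

Notation e' := (ext_edge e V1).
Notation w' := (ext_weight w).

Lemma ext_edge_strip x y : e' x y -> e (strip x) (strip y).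
Proof. by case: x => u; case: y => v //= /and3P []. Qed.

Lemma neg_triangle_strip x y z :
  neg_triangle e' w' x y z -> neg_triangle e w (strip x) (strip y) (strip z).
Proof.
by case/and4P=> /ext_edge_strip exy /ext_edge_strip eyz /ext_edge_strip exz wn;
  apply/and4P.
Qed.

Definition lift (v : T) : T + T := if v \in V1 then inr v else inl v.

Lemma ext_edge_lift a b : e' (lift a) (lift b) = e a b.
Proof.
rewrite /lift; case: (boolP (a \in V1)) => ha; case: (boolP (b \in V1)) => hb /=;
  by rewrite ?ha ?hb.
Qed.

Lemma strip_lift a : strip (lift a) = a.
Proof. by rewrite /lift; case: (a \in V1). Qed.

Lemma neg_triangle_lift a b c :
  neg_triangle e' w' (lift a) (lift b) (lift c) = neg_triangle e w a b c.
Proof. by rewrite /neg_triangle !ext_edge_lift /ext_weight !strip_lift. Qed.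

Lemma on_neg_triangle_strip x :
  on_neg_triangle e' w' x -> on_neg_triangle e w (strip x).
Proof.
case/existsP=> y /existsP [z t]; apply/existsP; exists (strip y).
by apply/existsP; exists (strip z); apply: neg_triangle_strip.
Qed.

Lemma on_neg_triangle_inl u : on_neg_triangle e' w' (inl u) = on_neg_triangle e w u.
Proof.
apply/idP/idP; first exact: on_neg_triangle_strip.
by case/existsP=> y /existsP [z t]; apply/existsP; exists (inl y);
  apply/existsP; exists (inl z).
Qed.

Lemma on_neg_triangle_inr u :
  on_neg_triangle e' w' (inr u) = (u \in V1) && on_neg_triangle e w u.
Proof.
apply/idP/andP => [t | [uV1 /existsP [y /existsP [z t]]]].
  split; last exact: (on_neg_triangle_strip t).
  by case/existsP: t => -[v|v] /existsP [z /and4P [/and3P []]].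
have -> : inr u = lift u by rewrite /lift uV1.
by apply/existsP; exists (lift y); apply/existsP; exists (lift z);
  rewrite neg_triangle_lift.
Qed.

Lemma ext_neg_vertices :
  [set x : T + T | ext_vert V1 x && on_neg_triangle e' w' x]
  = inl @: neg_vertices e w :|: inr @: (neg_vertices e w :&: V1).
Proof.
apply/setP=> -[u|u]; rewrite !inE /=.
  have -> : (inl u \in inr @: (neg_vertices e w :&: V1)) = false.
    by apply/negP => /imsetP [].
  by rewrite on_neg_triangle_inl (mem_imset _ _ (@inl_inj _ _)) inE orbF.
have -> : (inr u \in inl @: neg_vertices e w) = false by apply/negP => /imsetP [].
rewrite on_neg_triangle_inr (mem_imset _ _ (@inr_inj _ _)) !inE.
by rewrite andbA andbb andbC.
Qed.

Lemma Nneg_card :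
  Nneg e w V1 = (#|neg_vertices e w| + #|neg_vertices e w :&: V1|)%N.
Proof. by rewrite /Nneg ext_neg_vertices card_imset_inl_inr. Qed.

End ExtendedGraph.

Unset Implicit Arguments. Set Strict Implicit.

Theorem mainTheorem9 (T : finType) (e : rel T) (w : T -> T -> int)
  (e_sym : symmetric e) (e_irr : irreflexive e)
  (w_sym : forall u v, w u v = w v u) :
  (~~ has_neg_triangle e w ->
     #|[set V1 : {set T} | ~~ odd (Nneg e w V1)]| = #|{set T}|) /\
  (has_neg_triangle e w ->
     (2 * #|[set V1 : {set T} | odd (Nneg e w V1)]|)%N = #|{set T}|).
Proof.
split => [noneg | neg].
  have /eqP W0 : neg_vertices e w == set0 by rewrite -[_ == _]negbK neg_vertices_neq0.
  rewrite -cardsT; apply: eq_card => V.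
  by rewrite !inE Nneg_card W0 set0I cards0.
have W_neq0 : neg_vertices e w != set0 by rewrite neg_vertices_neq0.
rewrite -(card_odd_setI #|neg_vertices e w| W_neq0).
have -> // : [set V1 | odd (Nneg e w V1)]
  = [set V1 | odd (#|neg_vertices e w| + #|neg_vertices e w :&: V1|)].
by apply/setP=> V; rewrite !inE Nneg_card.
Qed.
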